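(* Let $m\in\mathbb{N}$. Consider the set of real-valued time series of complexity at most $m$, modulo the equivalence relation of having discrete Fréchet distance $0$, equipped with the discrete Fréchet distance. This metric space has doubling dimension $\Theta(m)$.
   Context: A time series of complexity $m$ is a vector in $\mathbb{R}^m$. For $x\in\mathbb{R}^{m_1}$, $y\in\mathbb{R}^{m_2}$, a traversal is a sequence of index pairs $(i,j)\in[m_1]\times[m_2]$ starting at $(1,1)$, ending at $(m_1,m_2)$, where each $(i,j)$ is followed by one of $(i,j+1)$, $(i+1,j)$, $(i+1,j+1)$. The discrete Fréchet distance $d_{dF}(x,y)$ is the minimum over traversals $T$ of $\max_{(i,j)\in T}|x_i-y_j|$. For a metric space $(X,d_X)$, the doubling constant $\lambda_X$ is the smallest integer such that every ball $B_X(x,r)=\{y\in X: d_X(x,y)\le r\}$, $x\in X$, $r>0$, can be covered by at most $\lambda_X$ balls of radius $r/2$ centered at points of $X$; the doubling dimension is $\log\lambda_X$. *)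

From HB Require Import structures.
From mathcomp Require Import all_boot all_order all_algebra.
From mathcomp Require Import all_classical all_reals.
From mathcomp Require Import Rstruct exp.
Set Implicit Arguments. Unset Strict Implicit. Unset Printing Implicit Defensive.
Import Order.TTheory GRing.Theory Num.Theory.
Local Open Scope ring_scope.
Local Open Scope classical_set_scope.

Notation RR := Rdefinitions.R.

(* A time series is a finite sequence of reals; its complexity is its length. *)
Definition time_series := seq RR.

Definition trav_step (p q : nat * nat) : bool :=
  [|| q == (p.1, p.2.+1), q == (p.1.+1, p.2) | q == (p.1.+1, p.2.+1)].

(* T is a traversal of index grid [m1] x [m2]: starts at (1,1), ends at (m1,m2)
   (here 0-based: (0,0) and (m1-1,m2-1)), and consecutive pairs are allowed steps. *)
Definition traversal (m1 m2 : nat) (T : seq (nat * nat)) : Prop :=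
  exists rest, T = (0%N, 0%N) :: rest /\ path trav_step (0%N, 0%N) rest /\
               last (0%N, 0%N) rest = (m1.-1, m2.-1).

Definition trav_cost (x y : time_series) (T : seq (nat * nat)) : RR :=
  \big[Num.max/0]_(p <- T) `|nth 0 x p.1 - nth 0 y p.2|.

Definition dF (x y : time_series) : RR :=
  inf [set c | exists T, traversal (size x) (size y) T /\ c = trav_cost x y T].

Definition TS (m : nat) (x : time_series) : Prop := (0 < size x <= m)%N.

Definition doubling_cover (m k : nat) : Prop :=
  forall x, TS m x -> forall r : RR, 0 < r ->
    exists s : seq time_series, (size s <= k)%N /\ (forall c, c \in s -> TS m c) /\
      forall y, TS m y -> dF x y <= r -> exists2 c, c \in s & dF c y <= r / 2.

Definition is_doubling_constant (m lam : nat) : Prop :=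
  doubling_cover m lam /\ forall k, doubling_cover m k -> (lam <= k)%N.

From mathcomp Require Import all_boot all_order all_algebra.
From mathcomp Require Import all_classical all_reals.
From mathcomp Require Import Rstruct exp.
From mathcomp Require Import ring lra zify.
Import Order.TTheory GRing.Theory Num.Theory.
Set Implicit Arguments.
Unset Strict Implicit.
Local Open Scope ring_scope.

(* Lower bound: around x = (0, 10, ..., 10(m-1)) the 2^m series x_k + (+-1) all lie
   within distance 1, but a ball of radius 1/2 contains at most one of them: composing
   the two traversals through the centre would match an entry of one series with an
   entry of the other at distance < 6/5, which forces equal indices and equal signs.
   Upper bound: if dF(x, y) <= r, a traversal of cost < 5r/4 assigns to every index j
   of y the first index i(j) of x matched with it; j |-> i(j) + j is strictly
   increasing with values < 2m, and y_j - x_(i(j)) lies in one of four intervals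
   whose midpoints are within r/2 of it.  Hence y is r/2-close to one of
   2^(2m) * 4^m = 2^(4m) series built from x, and the doubling constant lies
   between 2^m and 2^(4m). *)

Lemma trav_step_fst p q : trav_step p q -> (p.1 <= q.1 <= p.1.+1)%N.
Proof. by case: p q => a b [c d] /or3P[] /eqP[-> ->] /=; lia. Qed.

Lemma trav_step_snd p q : trav_step p q -> (p.2 <= q.2 <= p.2.+1)%N.
Proof. by case: p q => a b [c d] /or3P[] /eqP[-> ->] /=; lia. Qed.

Section UnitStepPath.

Variable f : nat * nat -> nat.
Hypothesis f_step : forall p q, trav_step p q -> (f p <= f q <= (f p).+1)%N.

Lemma unit_step_path_bounds p s q : path trav_step p s -> q \in p :: s ->
  (f p <= f q <= f (last p s))%N.
Proof.
elim: s p q => [|a s IH] p q /=; first by rewrite inE => _ /eqP ->; lia.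
move=> /andP[/f_step step_pa path_a]; rewrite in_cons => /orP[/eqP->|qs].
  by have := IH a a path_a (mem_head _ _); lia.
by have := IH a q path_a qs; lia.
Qed.

Lemma unit_step_path_hit p s k : path trav_step p s ->
  (f p <= k <= f (last p s))%N -> exists2 q, q \in p :: s & f q = k.
Proof.
elim: s p => [|a s IH] p /=; first by move=> _ k_p; exists p; rewrite ?mem_head //; lia.
move=> /andP[/f_step step_pa path_a] k_in.
have [k_le_p|p_lt_k] := leqP k (f p); first by exists p; rewrite ?mem_head //; lia.
have [|q qs fq] := IH a path_a; first lia.
by exists q; rewrite // in_cons qs orbT.
Qed.

End UnitStepPath.

Lemma traversal_mem_lt M n T p : (0 < M)%N -> (0 < n)%N -> traversal M n T -> p \in T ->
  (p.1 < M)%N /\ (p.2 < n)%N.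
Proof.
move=> M_gt0 n_gt0 [s [-> [path_s last_s]]] pT.
have := unit_step_path_bounds (f := fst) trav_step_fst path_s pT.
have := unit_step_path_bounds (f := snd) trav_step_snd path_s pT.
by rewrite last_s /=; lia.
Qed.

Lemma traversal_hit_fst M n T i : traversal M n T -> (i < M)%N ->
  exists2 p, p \in T & p.1 = i.
Proof.
move=> [s [-> [path_s last_s]]] i_lt.
apply: (unit_step_path_hit (f := fst) trav_step_fst path_s).
by rewrite last_s /=; lia.
Qed.

Lemma traversal_hit_snd M n T j : traversal M n T -> (j < n)%N ->
  exists2 p, p \in T & p.2 = j.
Proof.
move=> [s [-> [path_s last_s]]] j_lt.
apply: (unit_step_path_hit (f := snd) trav_step_snd path_s).
by rewrite last_s /=; lia.
Qed.

Lemma traversal_rcons M n T q : traversal M n T -> trav_step (M.-1, n.-1) q ->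
  traversal q.1.+1 q.2.+1 (rcons T q).
Proof.
case: q => a b [s [-> [path_s last_s]]] step; exists (rcons s (a, b)).
by rewrite rcons_path path_s last_s last_rcons.
Qed.

Lemma traversal_diag n : (0 < n)%N -> exists T, traversal n n T /\
  forall p, p \in T -> p.1 = p.2 /\ (p.1 < n)%N.
Proof.
elim: n => [//|[|n] IH] _.
  by exists [:: (0, 0)]%N; split; [exists [::] | move=> p; rewrite inE => /eqP->].
have [T [trav_T diag_T]] := IH isT.
exists (rcons T (n.+1, n.+1)); split.
  by apply: traversal_rcons trav_T _; rewrite /trav_step /= eqxx !orbT.
move=> p; rewrite mem_rcons in_cons => /orP[/eqP->//|/diag_T[-> p_lt]]; split=> //; lia.
Qed.

Lemma traversal_exists M n : (0 < M)%N -> (0 < n)%N -> exists T, traversal M n T.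
Proof.
have row k : (0 < k)%N -> exists T, traversal 1 k T.
  elim: k => [//|[|k] IH] _; first by exists [:: (0, 0)]%N, [::].
  have [T trav_T] := IH isT; exists (rcons T (0, k.+1))%N.
  by apply: traversal_rcons trav_T _; rewrite /trav_step eqxx.
elim: M => [//|[|M] IH] _ n_gt0; first exact: row.
have [T trav_T] := IH isT n_gt0; exists (rcons T (M.+1, n.-1)).
rewrite -{2}(prednK n_gt0); apply: traversal_rcons trav_T _.
by rewrite /trav_step /= eqxx orbT.
Qed.

Lemma trav_cost_ge0 x y T : 0 <= trav_cost x y T.
Proof. exact: bigmax_ge_id. Qed.

Lemma trav_cost_le x y T (d : RR) : 0 <= d ->
  (forall p, p \in T -> `|nth 0 x p.1 - nth 0 y p.2| <= d) -> trav_cost x y T <= d.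
Proof.
by move=> d_ge0 le_d; rewrite /trav_cost big_seq_cond bigmax_le // => p /andP[/le_d].
Qed.

Lemma le_trav_cost x y T p : p \in T -> `|nth 0 x p.1 - nth 0 y p.2| <= trav_cost x y T.
Proof. by move=> pT; rewrite /trav_cost (le_bigmax_seq _ _ _ _ pT). Qed.

Lemma dF_le_trav_cost x y T : traversal (size x) (size y) T -> dF x y <= trav_cost x y T.
Proof.
move=> trav_T; apply: ge_inf; last by exists T.
by exists 0 => c [T' [_ ->]]; exact: trav_cost_ge0.
Qed.

Lemma dF_lt_traversal x y (d : RR) : (0 < size x)%N -> (0 < size y)%N -> dF x y < d ->
  exists T, traversal (size x) (size y) T /\ forall p, p \in T ->
    [/\ (p.1 < size x)%N, (p.2 < size y)%N & `|nth 0 x p.1 - nth 0 y p.2| < d].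
Proof.
move=> x_gt0 y_gt0 /inf_lt[].
  by have [T trav_T] := traversal_exists x_gt0 y_gt0; exists (trav_cost x y T), T.
move=> _ [T [trav_T ->]] cost_lt; exists T; split => // p pT.
have [p1_lt p2_lt] := traversal_mem_lt x_gt0 y_gt0 trav_T pT.
by split => //; apply: le_lt_trans (le_trav_cost _ _ pT) cost_lt.
Qed.

Lemma dF_le_pointwise x y (d : RR) : size x = size y -> (0 < size x)%N ->
  (forall j, (j < size x)%N -> `|nth 0 x j - nth 0 y j| <= d) -> dF x y <= d.
Proof.
move=> size_xy x_gt0 le_d; have [T [trav_T diag_T]] := traversal_diag x_gt0.
rewrite {2}size_xy in trav_T; apply: le_trans (dF_le_trav_cost trav_T) _.
apply: trav_cost_le; first exact: le_trans (normr_ge0 _) (le_d 0%N x_gt0).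
by move=> p /diag_T[<- p_lt]; apply: le_d.
Qed.

Lemma dF_lt_match c y1 y2 (d : RR) :
  (0 < size c)%N -> (0 < size y1)%N -> (0 < size y2)%N -> dF c y1 < d -> dF c y2 < d ->
  forall k, (k < size y1)%N -> exists2 l, (l < size y2)%N & `|nth 0 y1 k - nth 0 y2 l| < d + d.
Proof.
move=> c_gt0 y1_gt0 y2_gt0 /(dF_lt_traversal c_gt0 y1_gt0)[T1 [trav1 close1]].
move=> /(dF_lt_traversal c_gt0 y2_gt0)[T2 [trav2 close2]] k k_lt.
have [p pT1 <-] := traversal_hit_snd trav1 k_lt; have [p1_lt _ dp] := close1 p pT1.
have [q qT2 qp] := traversal_hit_fst trav2 p1_lt; have [_ q2_lt dq] := close2 q qT2.
exists q.2 => //; rewrite -qp in dp.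
rewrite -(subrKA (nth 0 c q.1)) addrC; apply: le_lt_trans (ler_normD _ _) _.
by rewrite ltrD // distrC.
Qed.

Lemma card_le_size_cover (T : finType) (E : eqType) (s : seq E) (P : T -> pred E) :
  (forall t, has (P t) s) -> {in s, forall c t1 t2, P t1 c -> P t2 c -> t1 = t2} ->
  (#|T| <= size s)%N.
Proof.
move=> cover P_inj.
pose g t : 'I_(size s) := Ordinal (etrans (esym (has_find _ _)) (cover t)).
suff g_inj : injective g by rewrite -[size s]card_ord; apply: leq_card g_inj.
move=> t1 t2 /(congr1 val) /= find_eq; have [c0 _ _] := hasP (cover t1).
have c1 := nth_find c0 (cover t1); rewrite find_eq in c1.
apply: (P_inj _ _ _ _ c1 (nth_find c0 (cover t2))).
by apply: mem_nth; rewrite -has_find.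
Qed.

Definition pm1 (b : bool) : RR := if b then 1 else -1.

Definition comb m : time_series := mkseq (fun k => 10 * k%:R) m.

Definition signed_comb m (b : m.-tuple bool) : time_series :=
  mkseq (fun k => 10 * k%:R + pm1 (nth false b k)) m.

Lemma signed_comb_sep (k l : nat) (b1 b2 : bool) :
  `|10 * k%:R + pm1 b1 - (10 * l%:R + pm1 b2)| < 6 / 5 -> k = l /\ b1 = b2.
Proof.
have [k_lt_l|l_lt_k|<-] := ltngtP k l; rewrite ltr_norml => /andP[lb ub].
- have k_lt_l_R : (k%:R + 1 <= l%:R :> RR) by rewrite natr1 ler_nat.
  by exfalso; case: b1 b2 lb ub => [] [] /=; lra.
- have l_lt_k_R : (l%:R + 1 <= k%:R :> RR) by rewrite natr1 ler_nat.
  by exfalso; case: b1 b2 lb ub => [] [] /=; lra.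
- by split=> //; case: b1 b2 lb ub => [] [] //= lb ub; exfalso; lra.
Qed.

Lemma dF_comb_signed_comb m (b : m.-tuple bool) : (0 < m)%N ->
  dF (comb m) (signed_comb b) <= 1.
Proof.
move=> m_gt0; apply: dF_le_pointwise; rewrite ?size_mkseq // => j j_lt.
by rewrite !nth_mkseq // opprD addNKr normrN /pm1; case: ifP; rewrite ?normrN normr1.
Qed.

Lemma signed_comb_inj_dF m (b1 b2 : m.-tuple bool) c : (0 < size c)%N ->
  dF c (signed_comb b1) < 3 / 5 -> dF c (signed_comb b2) < 3 / 5 -> b1 = b2.
Proof.
move=> c_gt0 d1 d2; have [m0|m_gt0] := posnP m.
  by move: b1 b2 d1 d2; rewrite m0 => b1 b2; rewrite (tuple0 b1) (tuple0 b2).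
have size_sc (b : m.-tuple bool) : size (signed_comb b) = m by rewrite size_mkseq.
have match_k := dF_lt_match c_gt0 _ _ d1 d2; rewrite !size_sc in match_k.
apply: eq_from_tnth => k; rewrite !(tnth_nth false).
have [l l_lt] := match_k m_gt0 m_gt0 k (ltn_ord k).
rewrite !nth_mkseq // (_ : 3 / 5 + 3 / 5 = 6 / 5 :> RR); last by lra.
by move=> /signed_comb_sep[<-].
Qed.

Lemma exp2_le_doubling_cover m k : (0 < m)%N -> doubling_cover m k -> (2 ^ m <= k)%N.
Proof.
move=> m_gt0 cover.
have TS_comb : TS m (comb m) by rewrite /TS size_mkseq m_gt0 leqnn.
have [s [size_s [TS_s cover_s]]] := cover _ TS_comb 1 ltr01.
have -> : (2 ^ m = #|{: m.-tuple bool}|)%N by rewrite card_tuple card_bool.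
apply: leq_trans size_s.
apply: (@card_le_size_cover _ _ s (fun b c => dF c (signed_comb b) <= 1 / 2)).
  move=> b; have TS_b : TS m (signed_comb b) by rewrite /TS size_mkseq m_gt0 leqnn.
  have [c cs dc] := cover_s _ TS_b (dF_comb_signed_comb b m_gt0).
  by apply/hasP; exists c.
move=> c /TS_s /andP[c_gt0 _] b1 b2 d1 d2.
by apply: (signed_comb_inj_dF c_gt0); apply: le_lt_trans (_ : 1 / 2 < 3 / 5); lra.
Qed.

Definition quant_level (r : RR) (q : 'I_4) : RR := (2 * q%:R - 3) / 4 * r.

Definition quantize (r d : RR) : 'I_4 :=
  if d < - (r / 2) then inord 0 else if d < 0 then inord 1
  else if d < r / 2 then inord 2 else inord 3.

Lemma dist_quantize r d : 0 < r -> `|d| < 5 / 4 * r ->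
  `|d - quant_level r (quantize r d)| <= r / 2.
Proof.
move=> r_gt0; rewrite ltr_norml => /andP[lb ub]; rewrite /quantize /quant_level.
by case: ifP => ?; [|case: ifP => ?; [|case: ifP => ?]];
  rewrite inordK //= ler_norml; apply/andP; split; lra.
Qed.

Definition match_index (T : seq (nat * nat)) (j : nat) : nat := find (fun p => p.2 == j) T.

Definition first_match (T : seq (nat * nat)) (j : nat) : nat :=
  (nth (0, 0) T (match_index T j)).1%N.

Lemma match_indexP M n T j : traversal M n T -> (j < n)%N ->
  (match_index T j < size T)%N /\ (nth (0, 0) T (match_index T j)).2 = j.
Proof.
move=> trav_T j_lt; have [p pT pj] := traversal_hit_snd trav_T j_lt.
have hit_j : has (fun p => p.2 == j) T by apply/hasP; exists p => //; apply/eqP.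
by rewrite -has_find hit_j; split=> //; apply/eqP/(nth_find (0, 0)%N hit_j).
Qed.

Lemma first_match_mem M n T j : traversal M n T -> (j < n)%N -> (first_match T j, j) \in T.
Proof.
move=> trav_T /(match_indexP trav_T)[a_lt a_j].
by rewrite /first_match -[in X in (_, X)]a_j -surjective_pairing mem_nth.
Qed.

Definition le_pair (p q : nat * nat) : bool := (p.1 <= q.1)%N && (p.2 <= q.2)%N.

Lemma traversal_sorted M n T : traversal M n T -> sorted le_pair T.
Proof.
move=> [s [-> [path_s _]]]; apply: sub_path path_s => p q step; rewrite /le_pair.
by have /andP[-> _] := trav_step_fst step; have /andP[-> _] := trav_step_snd step.
Qed.

Lemma first_match_mono M n T j j' : traversal M n T -> (j <= j')%N -> (j' < n)%N ->
  (first_match T j <= first_match T j')%N.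
Proof.
move=> trav_T le_jj' j'_lt.
have le_pair_trans : transitive le_pair.
  by move=> ? ? ? /andP[? ?] /andP[? ?]; apply/andP; split; lia.
have le_pair_refl : reflexive le_pair by move=> p; rewrite /le_pair !leqnn.
have nth_le := sorted_leq_nth le_pair_trans le_pair_refl (0, 0)%N (traversal_sorted trav_T).
have [a_lt a_j] := match_indexP trav_T (leq_ltn_trans le_jj' j'_lt).
have [a'_lt a'_j'] := match_indexP trav_T j'_lt.
have [le_aa'|lt_a'a] := leqP (match_index T j) (match_index T j').
  by have /andP[] := nth_le _ _ a_lt a'_lt le_aa'.
have /andP[_] := nth_le _ _ a'_lt a_lt (ltnW lt_a'a); rewrite a_j a'_j' => le_j'j.
have eq_jj' : j = j' by apply/eqP; rewrite eqn_leq le_jj'.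
by move: lt_a'a; rewrite eq_jj' ltnn.
Qed.

Lemma filter_iota_sorted (U : seq nat) (N : nat) : sorted ltn U ->
  (forall t, t \in U -> (t < N)%N) -> [seq t <- iota 0 N | t \in U] = U.
Proof.
move=> U_sorted U_lt; apply: (irr_sorted_eq ltn_trans ltnn) => //.
  by apply: sorted_filter; [exact: ltn_trans | exact: iota_ltn_sorted].
move=> t; rewrite mem_filter mem_iota /=; apply/andP/idP => [[]//|tU].
by rewrite tU U_lt.
Qed.

Definition code m := ((2 * m).-tuple bool * m.-tuple 'I_4)%type.

(* The bits of c.1 mark the values i(j) + j of a nondecreasing index map j |-> i(j)
   into x, so that i(j) is recovered as the j-th marked position minus j; c.2 holds
   the quantized offsets.  Codes marking no position or more than m decode to x. *)
Definition decode m (x : time_series) (r : RR) (c : code m) : time_series :=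
  let u := [seq t <- iota 0 (2 * m) | nth false c.1 t] in
  if (0 < size u <= m)%N then
    [seq nth 0 x (nth 0%N u j - j) + quant_level r (nth ord0 c.2 j) | j <- iota 0 (size u)]
  else x.

Lemma TS_decode m x r (c : code m) : TS m x -> TS m (decode x r c).
Proof. by rewrite /decode; case: ifP => // size_u _; rewrite /TS size_map size_iota. Qed.

Lemma decode_monotone_match m x r n (i : nat -> nat) (q : nat -> 'I_4) :
  (0 < n <= m)%N -> (forall j, (j < n)%N -> (i j < m)%N) ->
  (forall j j', (j <= j')%N -> (j' < n)%N -> (i j <= i j')%N) ->
  exists c : code m, decode x r c = [seq nth 0 x (i j) + quant_level r (q j) | j <- iota 0 n].
Proof.
move=> n_bd i_lt i_mono; pose U := [seq i j + j | j <- iota 0 n]%N.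
have U_sorted : sorted ltn U.
  apply: (@homo_sorted_in _ _ (fun j => j < n)%N); last exact: iota_ltn_sorted.
    by move=> j j' _ j'_lt lt_jj' /=; have := i_mono j j' (ltnW lt_jj') j'_lt; lia.
  by apply/allP => j; rewrite mem_iota.
have U_lt t : t \in U -> (t < 2 * m)%N.
  by case/mapP => j; rewrite mem_iota => /andP[_ j_lt] ->; have := i_lt j j_lt; lia.
have bits_size : size (mkseq (fun t => t \in U) (2 * m)) == (2 * m)%N by rewrite size_mkseq.
have levels_size : size (mkseq q m) == m by rewrite size_mkseq.
exists (Tuple bits_size, Tuple levels_size); rewrite /decode /=.
have -> : [seq t <- iota 0 (2 * m) | nth false (mkseq (fun t => t \in U) (2 * m)) t] = U.
  rewrite -[RHS](filter_iota_sorted U_sorted U_lt); apply: eq_in_filter => t.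
  by rewrite mem_iota => /andP[_ t_lt]; rewrite nth_mkseq.
rewrite size_map size_iota n_bd /=; apply/eq_in_map => j; rewrite mem_iota => /andP[_ j_lt].
by rewrite (nth_map 0%N) ?size_iota // nth_iota // add0n addnK nth_mkseq //; lia.
Qed.

Lemma doubling_cover_exp2_4m m : doubling_cover m (2 ^ (4 * m)).
Proof.
move=> x TS_x r r_gt0; have /andP[x_gt0 x_le] := TS_x.
exists (map (decode x r) (enum {: code m})); split.
  rewrite size_map -cardE card_prod !card_tuple card_bool card_ord.
  by rewrite (_ : 4 = 2 ^ 2)%N // -expnM -expnD leq_pexp2l //; lia.
split; first by move=> _ /mapP[c _ ->]; apply: TS_decode.
move=> y /andP[y_gt0 y_le] dxy.
(* dF is only an infimum: a traversal is guaranteed below 5r/4, not at r. *)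
have dxy_lt : dF x y < 5 / 4 * r by lra.
have [T [trav_T close_T]] := dF_lt_traversal x_gt0 y_gt0 dxy_lt.
pose i := first_match T.
have i_close j : (j < size y)%N -> (i j < m)%N /\ `|nth 0 y j - nth 0 x (i j)| < 5 / 4 * r.
  move=> j_lt; have [i_lt _ close_j] := close_T _ (first_match_mem trav_T j_lt).
  by rewrite distrC; split=> //; apply: leq_trans x_le.
pose q j := quantize r (nth 0 y j - nth 0 x (i j)).
have [c dec_c] := decode_monotone_match x r q (introT andP (conj y_gt0 y_le))
  (fun j j_lt => proj1 (i_close j j_lt)) (fun j j' => first_match_mono trav_T).
exists (decode x r c); first by apply: map_f; rewrite mem_enum.
rewrite dec_c; apply: dF_le_pointwise; rewrite ?size_map ?size_iota // => j j_lt.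
rewrite (nth_map 0%N) ?size_iota // nth_iota // add0n.
set d := nth 0 y j - nth 0 x (i j).
have -> : nth 0 x (i j) + quant_level r (q j) - nth 0 y j =
    - (d - quant_level r (quantize r d)).
  by rewrite /d /q; ring.
by rewrite normrN; apply: dist_quantize => //; have [] := i_close j j_lt.
Qed.

Lemma doubling_constant_bounds m : (0 < m)%N ->
  exists lam, [/\ is_doubling_constant m lam, (2 ^ m <= lam)%N & (lam <= 2 ^ (4 * m))%N].
Proof.
move=> m_gt0; have cover_ex : exists k, `[< doubling_cover m k >].
  by exists (2 ^ (4 * m))%N; apply/asboolP/doubling_cover_exp2_4m.
have [lam /asboolP cover_lam lam_min] := ex_minnP cover_ex.
exists lam; split; first by split=> // k /asboolP/lam_min.
- exact: exp2_le_doubling_cover.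
- by apply/lam_min/asboolP/doubling_cover_exp2_4m.
Qed.

Lemma log2_expn k : ln ((2 ^ k)%:R : RR) / ln 2 = k%:R.
Proof.
have ln2_gt0 : 0 < ln (2 : RR) by apply: ln_gt0; lra.
by rewrite natrX lnXn // -(mulr_natl (ln 2)) mulfK // gt_eqF.
Qed.

Lemma ler_log2_nat a b : (0 < a)%N -> (a <= b)%N -> ln (a%:R : RR) / ln 2 <= ln b%:R / ln 2.
Proof.
move=> a_gt0 le_ab; have ln2_gt0 : 0 < ln (2 : RR) by apply: ln_gt0; lra.
rewrite ler_pM2r ?invr_gt0 // ler_ln ?posrE ?ltr0n ?ler_nat //.
exact: leq_trans le_ab.
Qed.

Theorem proposition5p4 :
  exists c1 c2 : RR, 0 < c1 /\ 0 < c2 /\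
    forall m : nat, (1 <= m)%N ->
      exists lam : nat, is_doubling_constant m lam /\
        c1 * m%:R <= ln (lam%:R : RR) / ln 2 <= c2 * m%:R.
Proof.
exists 1, 4; do 2 split => //; move=> m m_gt0.
have [lam [lam_doubling lo hi]] := doubling_constant_bounds m_gt0.
exists lam; split => //.
rewrite mul1r -natrM -(log2_expn m) -(log2_expn (4 * m)).
have lam_gt0 : (0 < lam)%N by apply: leq_trans lo; rewrite expn_gt0.
by apply/andP; split; apply: ler_log2_nat; rewrite ?expn_gt0.
Qed.
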